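(* Let $1\le p<\infty$, $N\ge2$, and let $T_1,\dots,T_N$ be unilateral pseudo-shifts $T_i=T_{f_i,\omega^{(i)}}$ on $\ell^p(\mathbb{N})$. Then $T_1,\dots,T_N$ are d-hypercyclic if and only if they possess a dense d-hypercyclic manifold.
   Context: $\{e_m\}$ is the canonical basis of $\ell^p(\mathbb{N})$ over $\mathbb{K}\in\{\mathbb{R},\mathbb{C}\}$. For a strictly increasing $f:\mathbb{N}\to\mathbb{N}$ with $f(1)>1$ and a bounded, nonzero sequence of scalars $\omega=(w_{f(m)})_{m\in\mathbb{N}}$, the unilateral pseudo-shift is $T_{f,\omega}(\sum_m\alpha_me_m)=\sum_mw_{f(m)}\alpha_{f(m)}e_m$. Operators $T_1,\dots,T_N$ on $X$ are d-hypercyclic if some $x$ (a d-hypercyclic vector) has $\{(T_1^nx,\dots,T_N^nx):n\ge0\}$ dense in $\oplus_{i=1}^NX$; a dense d-hypercyclic manifold is a dense linear subspace whose nonzero vectors are all d-hypercyclic vectors. *)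

From Stdlib Require Import Reals.
From Coquelicot Require Import Coquelicot.
Open Scope R_scope.

(* nonnegative real power a^p with the convention 0^p = 0 (p > 0) *)
Definition rpow (a p : R) : R := if Rle_dec a 0 then 0 else Rpower a p.

Section Lp.
Context {K : AbsRing}.

(* sequences indexed by nat = {0,1,2,...}; index m corresponds to the paper's m+1 *)
Definition in_lp (p : R) (x : nat -> K) : Prop :=
  ex_series (fun m => rpow (abs (x m)) p).

Definition lp_norm (p : R) (x : nat -> K) : R :=
  rpow (Series (fun m => rpow (abs (x m)) p)) (/ p).

Definition seq_sub (x y : nat -> K) : nat -> K := fun m => minus (x m) (y m).
Definition seq_add (x y : nat -> K) : nat -> K := fun m => plus (x m) (y m).
Definition seq_scal (a : K) (x : nat -> K) : nat -> K := fun m => mult a (x m).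
Definition seq_zero : nat -> K := fun _ => zero.

(* admissible data of a unilateral pseudo-shift (0-based indexing):
   f strictly increasing with f 0 > 0 (paper: f(1) > 1),
   weights w m (= paper's w_{f(m)}) bounded and nonzero *)
Definition pseudo_shift_data (f : nat -> nat) (w : nat -> K) : Prop :=
  (forall m n, (m < n)%nat -> (f m < f n)%nat) /\ (0 < f 0)%nat /\
  (exists B, forall m, abs (w m) <= B) /\ (forall m, w m <> zero).

Definition pseudo_shift (f : nat -> nat) (w : nat -> K) (x : nat -> K) : nat -> K :=
  fun m => mult (w m) (x (f m)).

Definition d_hypercyclic_vector (p : R) (N : nat)
    (T : nat -> (nat -> K) -> (nat -> K)) (x : nat -> K) : Prop :=
  in_lp p x /\
  forall ys : nat -> (nat -> K), (forall i, (i < N)%nat -> in_lp p (ys i)) ->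
  forall eps, 0 < eps ->
  exists n : nat, forall i, (i < N)%nat ->
    lp_norm p (seq_sub (Nat.iter n (T i) x) (ys i)) < eps.

Definition d_hypercyclic (p : R) (N : nat) (T : nat -> (nat -> K) -> (nat -> K)) : Prop :=
  exists x, d_hypercyclic_vector p N T x.

Definition has_dense_d_hypercyclic_manifold (p : R) (N : nat)
    (T : nat -> (nat -> K) -> (nat -> K)) : Prop :=
  exists M : (nat -> K) -> Prop,
    (forall x, M x -> in_lp p x) /\
    M seq_zero /\
    (forall x y, M x -> M y -> M (seq_add x y)) /\
    (forall a x, M x -> M (seq_scal a x)) /\
    (forall y, in_lp p y -> forall eps, 0 < eps ->
        exists x, M x /\ lp_norm p (seq_sub x y) < eps) /\
    (forall x, M x -> ~ (forall m, x m = zero) -> d_hypercyclic_vector p N T x).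

Definition corollary_statement : Prop :=
  forall (p : R) (N : nat) (fs : nat -> nat -> nat) (ws : nat -> nat -> K),
    1 <= p -> (2 <= N)%nat ->
    (forall i, (i < N)%nat -> pseudo_shift_data (fs i) (ws i)) ->
    (d_hypercyclic p N (fun i => pseudo_shift (fs i) (ws i)) <->
     has_dense_d_hypercyclic_manifold p N (fun i => pseudo_shift (fs i) (ws i))).

End Lp.

(* Let x be a d-hypercyclic vector of T_1, ..., T_N.  Its orbit returns close to any prescribed
   tuple at arbitrarily late times (perturb the target at a coordinate where the early iterates
   are small).  So one can choose disjoint coordinate windows [n_k, b_k), n_k increasing, such that
   T_i^(n_k) x is 1/(k+1)-close to T_i^(m_k) x for every i, and the part of T_i^(n_k) x read from
   coordinates beyond b_k is 1/(k+1)-small.  Window k also carries a label (t, j); windows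
   labelled (t, j) start where the tail of x is below 1/(j+1), and every pair of a label and a
   time m occurs as (label, m_k) for arbitrarily large k.

   The manifold is the span of the vectors e_t + 1_(W t j) x, where W t j is the union of the
   windows labelled (t, j).  As 1_(W t j) x tends to 0 when j grows, the span is dense.  A nonzero
   y = sum c_(t,j) (e_t + 1_(W t j) x) has a coefficient c0 = c_(t0,j0) <> 0, and y coincides with
   c0 x on every window labelled (t0, j0).  Since T_i^n only reads coordinates >= n, T_i^(n_k) y is
   then close to c0 T_i^(m_k) x, and choosing m_k with T_i^(m_k) x close to a target divided by c0
   shows that y is d-hypercyclic.  The converse holds because a dense manifold has a nonzero
   vector. *)

From Stdlib Require Import Reals Lra Lia ClassicalEpsilon FunctionalExtensionality Cantor.
From Coquelicot Require Import Coquelicot.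
Open Scope R_scope.

(** * Real powers and series *)

Lemma rpow_ge0 a p : 0 <= rpow a p.
Proof. unfold rpow; destruct (Rle_dec a 0); [lra | left; apply exp_pos]. Qed.

Lemma rpow_Rpower a p : 0 < a -> rpow a p = Rpower a p.
Proof. intros Ha; unfold rpow; destruct (Rle_dec a 0); [lra | reflexivity]. Qed.

Lemma rpow_0l p : rpow 0 p = 0.
Proof. unfold rpow; destruct (Rle_dec 0 0); [reflexivity | lra]. Qed.

Lemma rpow_1l p : rpow 1 p = 1.
Proof. rewrite rpow_Rpower by lra; unfold Rpower; rewrite ln_1, Rmult_0_r; apply exp_0. Qed.

Lemma rpow_gt0 a p : 0 < a -> 0 < rpow a p.
Proof. intros Ha; rewrite rpow_Rpower by exact Ha; apply exp_pos. Qed.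

Lemma rpow_lt_compat a b p : 0 < p -> 0 <= a < b -> rpow a p < rpow b p.
Proof.
  intros Hp [[Ha | <-] Hab].
  - rewrite !rpow_Rpower by lra; apply exp_increasing.
    apply Rmult_lt_compat_l; [exact Hp | apply ln_increasing; lra].
  - rewrite rpow_0l; apply rpow_gt0; exact Hab.
Qed.

Lemma rpow_le_compat a b p : 0 < p -> 0 <= a <= b -> rpow a p <= rpow b p.
Proof.
  intros Hp [Ha [Hab | <-]]; [left; apply rpow_lt_compat; lra | lra].
Qed.

Lemma rpow_mult_distr a b p : 0 <= a -> 0 <= b -> rpow (a * b) p = rpow a p * rpow b p.
Proof.
  intros [Ha | <-] [Hb | <-];
    try (rewrite ?Rmult_0_l, ?Rmult_0_r, !rpow_0l; ring).
  rewrite !rpow_Rpower by (try apply Rmult_lt_0_compat; assumption).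
  symmetry; apply Rpower_mult_distr; assumption.
Qed.

Lemma rpow_rpow_inv a p : 0 < p -> 0 <= a -> rpow (rpow a p) (/ p) = a.
Proof.
  intros Hp [Ha | <-]; [|rewrite !rpow_0l; reflexivity].
  rewrite (rpow_Rpower a), rpow_Rpower by (try apply exp_pos; exact Ha).
  rewrite Rpower_mult, Rinv_r by lra; apply Rpower_1; exact Ha.
Qed.

Lemma rpow_inv_rpow a p : 0 < p -> 0 <= a -> rpow (rpow a (/ p)) p = a.
Proof.
  intros Hp Ha; rewrite <- (Rinv_inv p) at 2.
  apply rpow_rpow_inv; [apply Rinv_0_lt_compat |]; assumption.
Qed.

Lemma rpow_sum3_le s u v w p : 0 < p -> 0 <= s -> 0 <= u -> 0 <= v -> 0 <= w ->
  s <= u + v + w -> rpow s p <= rpow 3 p * (rpow u p + rpow v p + rpow w p).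
Proof.
  intros Hp Hs Hu Hv Hw Hsum.
  set (m := Rmax u (Rmax v w)).
  assert (Hm : rpow m p <= rpow u p + rpow v p + rpow w p).
  { pose proof (rpow_ge0 u p); pose proof (rpow_ge0 v p); pose proof (rpow_ge0 w p).
    unfold m, Rmax; destruct (Rle_dec v w); destruct (Rle_dec u _); lra. }
  assert (Hsm : s <= 3 * m).
  { unfold m; pose proof (Rmax_l u (Rmax v w)); pose proof (Rmax_r u (Rmax v w)).
    pose proof (Rmax_l v w); pose proof (Rmax_r v w); lra. }
  apply Rle_trans with (rpow (3 * m) p).
  - apply rpow_le_compat; lra.
  - rewrite rpow_mult_distr by (unfold m; pose proof (Rmax_l u (Rmax v w)); lra).
    apply Rmult_le_compat_l; [apply rpow_ge0 | exact Hm].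
Qed.

Lemma inv_succ_lt eps L : 0 < eps -> exists k, (L <= k)%nat /\ / INR (S k) < eps.
Proof.
  intros Heps; destruct (INR_unbounded (/ eps)) as [n Hn].
  exists (Nat.max n L); split; [lia|].
  assert (INR n < INR (S (Nat.max n L))) by (apply lt_INR; lia).
  pose proof (Rinv_0_lt_compat _ Heps).
  rewrite <- (Rinv_inv eps); apply Rinv_lt_contravar; [apply Rmult_lt_0_compat |]; lra.
Qed.

Lemma sum_Sn_R (a : nat -> R) n : sum_n a (S n) = sum_n a n + a (S n).
Proof. rewrite sum_Sn; reflexivity. Qed.

Lemma ex_series_Rscal_l c (a : nat -> R) : ex_series a -> ex_series (fun n => c * a n).
Proof. exact (ex_series_scal_l c a). Qed.

Lemma ex_series_Rplus (a b : nat -> R) :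
  ex_series a -> ex_series b -> ex_series (fun n => a n + b n).
Proof. exact (ex_series_plus a b). Qed.

Lemma ex_series_of_bounded (a : nat -> R) B : (forall m, 0 <= a m) ->
  (forall n, sum_n a n <= B) -> ex_series a.
Proof.
  intros Ha HB; destruct (ex_finite_lim_seq_incr (sum_n a) B) as [l Hl]; [|exact HB|].
  - intro n; rewrite sum_Sn_R; specialize (Ha (S n)); lra.
  - exists l; exact Hl.
Qed.

Lemma Series_tail_lt (a : nat -> R) d : ex_series a -> 0 < d ->
  exists M, Series (fun k => a (M + k)%nat) < d.
Proof.
  intros Ha Hd.
  destruct (proj2 (is_lim_seq_spec (sum_n a) (Series a)) (Series_correct a Ha) (mkposreal d Hd))
    as [M HM].
  exists (S M); specialize (HM M (le_n M)); simpl in HM.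
  pose proof (Series_incr_n a (S M) ltac:(lia) Ha) as Hsplit; simpl in Hsplit.
  rewrite <- sum_n_Reals in Hsplit.
  apply Rabs_def2 in HM; simpl; lra.
Qed.

Section NonnegSeries.

Variable a : nat -> R.
Hypothesis a_ge0 : forall m, 0 <= a m.

Lemma sum_n_le_Series n : ex_series a -> sum_n a n <= Series a.
Proof.
  intros Ha; apply is_lim_seq_incr_compare; [exact (Series_correct a Ha) |].
  intro k; rewrite sum_Sn_R; specialize (a_ge0 (S k)); lra.
Qed.

Lemma sum_n_le_mono n m : (n <= m)%nat -> sum_n a n <= sum_n a m.
Proof. induction 1; [lra | rewrite sum_Sn_R; specialize (a_ge0 (S m)); lra]. Qed.

Lemma term_le_sum_n k : a k <= sum_n a k.
Proof.
  destruct k; [rewrite sum_O; lra|].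
  rewrite sum_Sn_R; pose proof (sum_n_le_mono 0 k ltac:(lia)); rewrite sum_O in *.
  specialize (a_ge0 0%nat); lra.
Qed.

Lemma Series_ge_term k : ex_series a -> a k <= Series a.
Proof.
  intros Ha; apply Rle_trans with (sum_n a k);
    [apply term_le_sum_n | apply sum_n_le_Series; exact Ha].
Qed.

Lemma Series_ge0 : ex_series a -> 0 <= Series a.
Proof. intros Ha; apply Rle_trans with (a 0%nat); [apply a_ge0 | apply Series_ge_term; exact Ha]. Qed.

Lemma ex_series_comp_strict_incr (f : nat -> nat) : (forall n, (f n < f (S n))%nat) ->
  ex_series a -> ex_series (fun n => a (f n)).
Proof.
  intros Hf Ha; apply (ex_series_of_bounded _ (Series a)); [intro; apply a_ge0 | intro n].
  apply Rle_trans with (sum_n a (f n)); [|apply sum_n_le_Series; exact Ha].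
  induction n as [|n IH]; [rewrite sum_O; apply term_le_sum_n |].
  rewrite sum_Sn_R; destruct (f (S n)) as [|k] eqn:E; [specialize (Hf n); lia|].
  rewrite sum_Sn_R; pose proof (sum_n_le_mono (f n) k ltac:(specialize (Hf n); lia)); lra.
Qed.

End NonnegSeries.

Lemma is_series_single (u : nat -> R) k : (forall m, m <> k -> u m = 0) -> is_series u (u k).
Proof.
  intros Hu; assert (Hsum : forall n, sum_n u n = if (k <=? n)%nat then u k else 0).
  { induction n as [|n IH]; [rewrite sum_O; destruct k; [reflexivity | apply Hu; lia]|].
    rewrite sum_Sn_R, IH; destruct (Nat.eq_dec (S n) k) as [<-|Hne].
    - destruct (Nat.leb_spec (S n) n), (Nat.leb_spec (S n) (S n)); lia || lra.
    - rewrite (Hu _ Hne); destruct (Nat.leb_spec k n), (Nat.leb_spec k (S n)); lia || lra. }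
  assert (Hlim : is_lim_seq (sum_n u) (u k)).
  { apply (is_lim_seq_ext_loc (fun _ => u k)); [|apply is_lim_seq_const].
    exists k; intros n Hn; rewrite Hsum; destruct (Nat.leb_spec k n); [reflexivity | lia]. }
  exact Hlim.
Qed.

(* Instances at [AbsRing.Ring K] of Coquelicot's ring lemmas: stated generically, they do not
   unify with terms built over an [AbsRing] under [rewrite]. *)
Lemma Kmult_zero_l {K : AbsRing} (a : K) : mult (@zero K) a = @zero K.
Proof. exact (@mult_zero_l (AbsRing.Ring K) a). Qed.

Lemma Kmult_zero_r {K : AbsRing} (a : K) : mult a (@zero K) = @zero K.
Proof. exact (@mult_zero_r (AbsRing.Ring K) a). Qed.

Lemma Kmult_plus_distr_l {K : AbsRing} (a b c : K) : mult a (plus b c) = plus (mult a b) (mult a c).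
Proof. exact (@mult_distr_l (AbsRing.Ring K) a b c). Qed.

Lemma Kmult_plus_distr_r {K : AbsRing} (a b c : K) : mult (plus a b) c = plus (mult a c) (mult b c).
Proof. exact (@mult_distr_r (AbsRing.Ring K) a b c). Qed.

Lemma Ksum_n_mult_l {K : AbsRing} (a : K) (u : nat -> K) n :
  @sum_n (AbsRing.AbelianMonoid K) (fun j => mult a (u j)) n = mult a (sum_n u n).
Proof. exact (@sum_n_mult_l (AbsRing.Ring K) a u n). Qed.

Lemma Kminus_plus_l {K : AbsRing} (a b : K) : minus (plus a b) a = b.
Proof.
  unfold minus; rewrite (plus_comm a b), <- plus_assoc.
  transitivity (plus b zero); [f_equal | apply plus_zero_r].
  exact (@plus_opp_r (AbsRing.AbelianGroup K) a).
Qed.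

Lemma mult_minus_distr_l {K : Ring} (a u v : K) : mult a (minus u v) = minus (mult a u) (mult a v).
Proof. unfold minus; rewrite opp_mult_r; apply mult_distr_l. Qed.

Lemma mult_minus_distr_r {K : Ring} (u v a : K) : mult (minus u v) a = minus (mult u a) (mult v a).
Proof. unfold minus; rewrite opp_mult_l; apply mult_distr_r. Qed.

Lemma plus_plus_swap {G : AbelianMonoid} (a b c d : G) :
  plus (plus a b) (plus c d) = plus (plus a c) (plus b d).
Proof. rewrite <- !plus_assoc, (plus_assoc b c d), (plus_comm b c), <- plus_assoc; reflexivity. Qed.

Lemma abs_minus_le {K : AbsRing} (a b : K) : abs (minus a b) <= abs a + abs b.
Proof. unfold minus; rewrite <- (abs_opp b); apply abs_triangle. Qed.

Lemma abs_le_minus_plus {K : AbsRing} (z y a : K) : abs a <= abs (minus z (plus y a)) + abs y + abs z.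
Proof.
  assert (Ea : a = plus (minus (plus y a) z) (minus z y))
    by (rewrite <- minus_trans, Kminus_plus_l; reflexivity).
  rewrite Ea at 1; eapply Rle_trans; [apply abs_triangle |].
  rewrite abs_minus; pose proof (abs_minus_le z y); lra.
Qed.

Lemma abs_minus_le_minus_plus {K : AbsRing} (z y e : K) :
  abs (minus z y) <= abs (minus z (plus y e)) + abs e.
Proof.
  rewrite (minus_trans (plus y e)), Kminus_plus_l; apply abs_triangle.
Qed.

Lemma abs_mult_minus3_le {K : AbsRing} (g c a a' b : K) :
  abs (minus (mult g a) (mult c b)) <=
  abs (minus g c) * abs a + abs c * abs (minus a a') + abs c * abs (minus a' b).
Proof.
  rewrite (minus_trans (mult c a)), (minus_trans (mult c a') (mult c a)).
  assert (E1 : minus (mult g a) (mult c a) = mult (minus g c) a)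
    by (symmetry; exact (@mult_minus_distr_r (AbsRing.Ring K) g c a)).
  assert (E2 : forall u v : K, minus (mult c u) (mult c v) = mult c (minus u v))
    by (intros u v; symmetry; exact (@mult_minus_distr_l (AbsRing.Ring K) c u v)).
  rewrite E1, !E2; eapply Rle_trans; [apply abs_triangle|].
  eapply Rle_trans; [apply Rplus_le_compat_l, abs_triangle|].
  pose proof (abs_mult (minus g c) a); pose proof (abs_mult c (minus a a')).
  pose proof (abs_mult c (minus a' b)); lra.
Qed.

Section FiniteSums.

Context {G : AbelianMonoid}.

Lemma sum_n_zero (u : nat -> G) n : (forall j, (j <= n)%nat -> u j = zero) -> sum_n u n = zero.
Proof. intros Hu; rewrite (sum_n_ext_loc u (fun _ => zero)) by exact Hu; apply sum_n_m_const_zero. Qed.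

Lemma sum_n_single (u : nat -> G) k n :
  (forall j, j <> k -> u j = zero) -> (k <= n)%nat -> sum_n u n = u k.
Proof.
  intros Hu; induction 1 as [|n Hkn IH].
  - destruct k as [|k]; [apply sum_O|].
    rewrite sum_Sn, sum_n_zero by (intros j Hj; apply Hu; lia); apply plus_zero_l.
  - rewrite sum_Sn, IH, (Hu (S n)) by lia; apply plus_zero_r.
Qed.

Lemma sum_n_trailing_zeros (u : nat -> G) L L' :
  (forall j, (L < j)%nat -> u j = zero) -> (L <= L')%nat -> sum_n u L' = sum_n u L.
Proof.
  intros Hu; induction 1 as [|L' HL IH]; [reflexivity|].
  rewrite sum_Sn, IH, (Hu (S L')) by lia; apply plus_zero_r.
Qed.

End FiniteSums.

(** * The spaces l^p *)

Definition abs_pow {K : AbsRing} (p : R) (v : nat -> K) (m : nat) : R := rpow (abs (v m)) p.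

Definition lp_sum {K : AbsRing} (p : R) (v : nat -> K) : R := Series (abs_pow p v).

Definition restrict {K : AbsRing} (P : nat -> bool) (v : nat -> K) : nat -> K :=
  fun m => if P m then v m else zero.

Lemma abs_restrict_le {K : AbsRing} P (v : nat -> K) m : abs (restrict P v m) <= abs (v m).
Proof. unfold restrict; destruct (P m); [lra | rewrite abs_zero; apply abs_ge_0]. Qed.

Definition spike {K : AbsRing} (k : nat) (a : K) : nat -> K :=
  fun m => if (m =? k)%nat then a else zero.

Section Lp.

Context {K : AbsRing}.
Variable p : R.
Hypothesis p_gt0 : 0 < p.

Lemma abs_pow_ge0 (v : nat -> K) m : 0 <= abs_pow p v m.
Proof. apply rpow_ge0. Qed.

Lemma lp_sum_ge0 (v : nat -> K) : in_lp p v -> 0 <= lp_sum p v.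
Proof. apply Series_ge0, abs_pow_ge0. Qed.

Lemma lp_sum_ge_coord (v : nat -> K) k alpha : in_lp p v -> 0 <= alpha <= abs (v k) ->
  rpow alpha p <= lp_sum p v.
Proof.
  intros Hv Halpha; apply Rle_trans with (abs_pow p v k).
  - apply rpow_le_compat; assumption.
  - apply Series_ge_term; [apply abs_pow_ge0 | exact Hv].
Qed.

Lemma lp_norm_lt_iff (v : nat -> K) eps : in_lp p v -> 0 < eps ->
  lp_norm p v < eps <-> lp_sum p v < rpow eps p.
Proof.
  intros Hv Heps; pose proof (lp_sum_ge0 v Hv) as Hsum.
  assert (Hinv : 0 < / p) by (apply Rinv_0_lt_compat; exact p_gt0).
  unfold lp_norm; fold (abs_pow p v); fold (lp_sum p v); split; intro H.
  - destruct (Rlt_or_le (lp_sum p v) (rpow eps p)) as [|Hge]; [assumption | exfalso].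
    pose proof (rpow_le_compat _ _ (/ p) Hinv (conj (rpow_ge0 eps p) Hge)).
    rewrite rpow_rpow_inv in * by lra; lra.
  - rewrite <- (rpow_rpow_inv eps p) by lra; apply rpow_lt_compat; auto.
Qed.

Lemma lp_sum_le_Series (s : nat -> K) (b : nat -> R) :
  (forall m, abs_pow p s m <= b m) -> ex_series b -> in_lp p s /\ lp_sum p s <= Series b.
Proof.
  intros Hsb Hb; assert (Hs : in_lp p s).
  { apply (@ex_series_le R_AbsRing R_CompleteNormedModule _ b); [|exact Hb].
    intro m; apply Rle_trans with (2 := Hsb m); right; apply Rabs_pos_eq, abs_pow_ge0. }
  split; [exact Hs | apply Series_le; [intro m; split; [apply abs_pow_ge0 | apply Hsb] | exact Hb]].
Qed.

Lemma lp_dominated1 (s u : nat -> K) A : 0 <= A -> in_lp p u ->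
  (forall m, abs (s m) <= A * abs (u m)) -> in_lp p s /\ lp_sum p s <= rpow A p * lp_sum p u.
Proof.
  intros HA Hu Hsu; unfold lp_sum; rewrite <- Series_scal_l.
  apply lp_sum_le_Series; [|apply ex_series_Rscal_l; exact Hu].
  intro m; unfold abs_pow; rewrite <- rpow_mult_distr by (auto; apply abs_ge_0).
  apply rpow_le_compat; [exact p_gt0 | split; [apply abs_ge_0 | apply Hsu]].
Qed.

Lemma lp_dominated3 (s u v w : nat -> K) A B C : 0 <= A -> 0 <= B -> 0 <= C ->
  in_lp p u -> in_lp p v -> in_lp p w ->
  (forall m, abs (s m) <= A * abs (u m) + B * abs (v m) + C * abs (w m)) ->
  in_lp p s /\
  lp_sum p s <= rpow 3 p * (rpow A p * lp_sum p u + rpow B p * lp_sum p v + rpow C p * lp_sum p w).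
Proof.
  intros HA HB HC Hu Hv Hw Hs.
  set (b := fun m => rpow 3 p *
    (rpow A p * abs_pow p u m + rpow B p * abs_pow p v m + rpow C p * abs_pow p w m)).
  assert (Hb : ex_series b).
  { apply ex_series_Rscal_l, ex_series_Rplus; [apply ex_series_Rplus |];
      apply ex_series_Rscal_l; assumption. }
  replace (rpow 3 p * _) with (Series b).
  - apply lp_sum_le_Series; [intro m | exact Hb].
    unfold b, abs_pow; rewrite <- !rpow_mult_distr by (auto; apply abs_ge_0).
    apply rpow_sum3_le; auto; try apply abs_ge_0; apply Rmult_le_pos; auto; apply abs_ge_0.
  - unfold b, lp_sum; rewrite Series_scal_l, !Series_plus, !Series_scal_l; try reflexivity;
      repeat (apply ex_series_Rplus || apply ex_series_Rscal_l); assumption.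
Qed.

Lemma lp_zero : in_lp p (@seq_zero K) /\ lp_sum p (@seq_zero K) = 0.
Proof.
  assert (Hz : forall m, abs_pow p (@seq_zero K) m = 0).
  { intro m; unfold abs_pow, seq_zero; rewrite abs_zero; apply rpow_0l. }
  assert (Hs : is_series (abs_pow p (@seq_zero K)) 0).
  { assert (Hlim : is_lim_seq (sum_n (abs_pow p (@seq_zero K))) 0).
    { apply (is_lim_seq_ext (fun _ => 0)); [|apply is_lim_seq_const].
      intro n; rewrite (sum_n_ext _ (fun _ => 0)), sum_n_const by exact Hz; simpl; ring. }
    exact Hlim. }
  split; [eexists; exact Hs | apply is_series_unique; exact Hs].
Qed.

Lemma lp_dominated2 (s u v : nat -> K) A B : 0 <= A -> 0 <= B -> in_lp p u -> in_lp p v ->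
  (forall m, abs (s m) <= A * abs (u m) + B * abs (v m)) ->
  in_lp p s /\ lp_sum p s <= rpow 3 p * (rpow A p * lp_sum p u + rpow B p * lp_sum p v).
Proof.
  intros HA HB Hu Hv Hs; destruct lp_zero as [Hz Hz0].
  destruct (lp_dominated3 s u v seq_zero A B 0 HA HB (Rle_refl 0) Hu Hv Hz) as [Hin Hle].
  { intro m; specialize (Hs m); lra. }
  rewrite Hz0, Rmult_0_r, Rplus_0_r in Hle; split; assumption.
Qed.

Lemma in_lp_add (u v : nat -> K) : in_lp p u -> in_lp p v -> in_lp p (seq_add u v).
Proof.
  intros Hu Hv; apply (lp_dominated2 _ u v 1 1); try lra; try assumption.
  intro m; pose proof (abs_triangle (u m) (v m)); unfold seq_add; lra.
Qed.

Lemma in_lp_sub (u v : nat -> K) : in_lp p u -> in_lp p v -> in_lp p (seq_sub u v).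
Proof.
  intros Hu Hv; apply (lp_dominated2 _ u v 1 1); try lra; try assumption.
  intro m; pose proof (abs_minus_le (u m) (v m)); unfold seq_sub; lra.
Qed.

Lemma in_lp_finite_support (v : nat -> K) M : (forall m, (M <= m)%nat -> v m = zero) -> in_lp p v.
Proof.
  intros Hv; apply (ex_series_incr_n (abs_pow p v) M); destruct lp_zero as [Hz _].
  apply (ex_series_ext (abs_pow p (@seq_zero K))); [|exact Hz].
  intro k; unfold abs_pow, seq_zero; rewrite Hv by lia; reflexivity.
Qed.

Lemma in_lp_restrict P (v : nat -> K) : in_lp p v -> in_lp p (restrict P v).
Proof.
  intros Hv; apply (lp_dominated1 _ v 1); [lra | exact Hv |].
  intro m; rewrite Rmult_1_l; apply abs_restrict_le.
Qed.

Lemma lp_restrict_tail (v : nat -> K) d : in_lp p v -> 0 < d ->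
  exists M, forall P, (forall m, P m = true -> (M <= m)%nat) -> lp_sum p (restrict P v) < d.
Proof.
  intros Hv Hd; destruct (Series_tail_lt _ d Hv Hd) as [M HM].
  exists M; intros P HP.
  assert (Hle : forall m, abs_pow p (restrict P v) m <= abs_pow p v m).
  { intro m; apply rpow_le_compat; [exact p_gt0 | split; [apply abs_ge_0 | apply abs_restrict_le]]. }
  apply Rle_lt_trans with (2 := HM).
  unfold lp_sum; rewrite (Series_incr_n_aux _ M).
  - apply Series_le; [|apply (ex_series_incr_n (abs_pow p v)); exact Hv].
    intro k; split; [apply abs_pow_ge0 | apply Hle].
  - intros k Hk; unfold abs_pow, restrict; destruct (P k) eqn:E.
    + specialize (HP k E); lia.
    + rewrite abs_zero; apply rpow_0l.
Qed.

Lemma abs_eventually_lt (v : nat -> K) alpha : in_lp p v -> 0 < alpha ->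
  exists M, forall m, (M <= m)%nat -> abs (v m) < alpha.
Proof.
  intros Hv Ha; destruct (proj2 (is_lim_seq_spec _ _) (ex_series_lim_0 _ Hv)
    (mkposreal _ (rpow_gt0 alpha p Ha))) as [M HM].
  exists M; intros m Hm; specialize (HM m Hm); simpl in HM.
  rewrite Rminus_0_r, Rabs_pos_eq in HM by apply rpow_ge0.
  destruct (Rlt_or_le (abs (v m)) alpha) as [|Hge]; [assumption | exfalso].
  pose proof (rpow_le_compat alpha (abs (v m)) p p_gt0 (conj (Rlt_le _ _ Ha) Hge)); lra.
Qed.

End Lp.

Lemma lp_spike {K : AbsRing} p k (a : K) :
  in_lp p (spike k a) /\ lp_sum p (spike k a) = rpow (abs a) p.
Proof.
  assert (Hs : is_series (abs_pow p (spike k a)) (rpow (abs a) p)).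
  { replace (rpow (abs a) p) with (abs_pow p (spike k a) k)
      by (unfold abs_pow, spike; rewrite Nat.eqb_refl; reflexivity).
    apply is_series_single; intros m Hm; unfold abs_pow, spike.
    rewrite (proj2 (Nat.eqb_neq m k) Hm), abs_zero; apply rpow_0l. }
  split; [eexists; exact Hs | apply is_series_unique; exact Hs].
Qed.

Lemma lp_sum_sub_spike_le {K : AbsRing} p (z y : nat -> K) k a : 0 < p ->
  in_lp p (seq_sub z (seq_add y (spike k a))) ->
  lp_sum p (seq_sub z y) <= rpow 3 p * (lp_sum p (seq_sub z (seq_add y (spike k a))) + rpow (abs a) p).
Proof.
  intros Hp Hz; destruct (lp_spike p k a) as [Hspike Hspike_sum].
  destruct (lp_dominated2 p Hp (seq_sub z y) (seq_sub z (seq_add y (spike k a))) (spike k a) 1 1)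
    as [_ Hle]; try lra; try assumption.
  - intro m; pose proof (abs_minus_le_minus_plus (z m) (y m) (spike k a m)).
    unfold seq_sub, seq_add; lra.
  - rewrite Hspike_sum, !rpow_1l, !Rmult_1_l in Hle; exact Hle.
Qed.

(** * Pseudo-shifts *)

Section StrictlyIncreasing.

Variable f : nat -> nat.
Hypothesis f_incr : forall m n, (m < n)%nat -> (f m < f n)%nat.
Hypothesis f_0 : (0 < f 0)%nat.

Lemma lt_strict_incr m : (m < f m)%nat.
Proof. induction m; [exact f_0 | specialize (f_incr m (S m) ltac:(lia)); lia]. Qed.

Lemma iter_strict_incr_lt n m m' : (m < m')%nat -> (Nat.iter n f m < Nat.iter n f m')%nat.
Proof. intros Hm; induction n; simpl; [exact Hm | apply f_incr; exact IHn]. Qed.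

Lemma iter_strict_incr_ge n m : (n + m <= Nat.iter n f m)%nat.
Proof. induction n; simpl; [lia | pose proof (lt_strict_incr (Nat.iter n f m)); lia]. Qed.

End StrictlyIncreasing.

Section PseudoShift.

Context {K : AbsRing}.
Variables (f : nat -> nat) (w : nat -> K).
Hypothesis shift_data : pseudo_shift_data f w.

Let T := pseudo_shift f w.

Lemma iter_pseudo_shift_local n (u v : nat -> K) :
  (forall t, (n <= t)%nat -> u t = v t) -> forall m, Nat.iter n T u m = Nat.iter n T v m.
Proof.
  destruct shift_data as [f_incr [f_0 _]].
  revert u v; induction n as [|n IH]; intros u v Huv m; [apply Huv; lia|].
  rewrite !Nat.iter_succ_r; apply IH; intros t Ht; unfold T, pseudo_shift.
  rewrite Huv; [reflexivity | pose proof (lt_strict_incr f f_incr f_0 t); lia].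
Qed.

Lemma iter_pseudo_shift_mult (comm : forall a b : K, mult a b = mult b a) n (g v : nat -> K) m :
  Nat.iter n T (fun t => mult (g t) (v t)) m = mult (g (Nat.iter n f m)) (Nat.iter n T v m).
Proof.
  revert m; induction n as [|n IH]; intro m; [reflexivity|].
  change (mult (w m) (Nat.iter n T (fun t => mult (g t) (v t)) (f m))
    = mult (g (Nat.iter (S n) f m)) (mult (w m) (Nat.iter n T v (f m)))).
  rewrite IH, (Nat.iter_succ_r n _ f m), !mult_assoc, (comm (w m)); reflexivity.
Qed.

Lemma in_lp_pseudo_shift p (v : nat -> K) : 0 < p -> in_lp p v -> in_lp p (T v).
Proof.
  destruct shift_data as [f_incr [_ [[B HB] _]]]; intros Hp Hv.
  assert (HB0 : 0 <= B) by (pose proof (abs_ge_0 (w 0%nat)); specialize (HB 0%nat); lra).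
  apply (lp_dominated1 p Hp _ (fun m => v (f m)) B HB0).
  - apply (ex_series_comp_strict_incr (abs_pow p v)); [apply abs_pow_ge0 | | exact Hv].
    intro n; apply f_incr; lia.
  - intro m; unfold T, pseudo_shift; eapply Rle_trans; [apply abs_mult |].
    apply Rmult_le_compat_r; [apply abs_ge_0 | apply HB].
Qed.

Lemma in_lp_iter_pseudo_shift p n (v : nat -> K) : 0 < p -> in_lp p v -> in_lp p (Nat.iter n T v).
Proof. intros Hp Hv; induction n; [exact Hv | apply in_lp_pseudo_shift; assumption]. Qed.

End PseudoShift.

Lemma orbits_in_lp {K : AbsRing} p N fs (ws : nat -> nat -> K) x : 0 < p ->
  (forall i, (i < N)%nat -> pseudo_shift_data (fs i) (ws i)) -> in_lp p x ->
  forall i n, (i < N)%nat -> in_lp p (Nat.iter n (pseudo_shift (fs i) (ws i)) x).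
Proof. intros Hp Hshifts Hx i n Hi; apply in_lp_iter_pseudo_shift; auto. Qed.

(** * Late returns of d-hypercyclic vectors *)

Lemma eventually_forall_lt (P : nat -> nat -> Prop) n0 :
  (forall n, (n < n0)%nat -> exists M, forall m, (M <= m)%nat -> P n m) ->
  exists M, forall m, (M <= m)%nat -> forall n, (n < n0)%nat -> P n m.
Proof.
  induction n0 as [|n0 IH]; intro H; [exists 0%nat; intros; lia|].
  destruct IH as [M1 H1]; [intros n Hn; apply H; lia|].
  destruct (H n0 ltac:(lia)) as [M2 H2]; exists (Nat.max M1 M2); intros m Hm n Hn.
  destruct (Nat.eq_dec n n0) as [->|]; [apply H2 | apply H1]; lia.
Qed.

Section LateReturns.

Context {K : AbsRing}.
Variables (p : R) (N : nat) (T : nat -> (nat -> K) -> (nat -> K)) (x : nat -> K).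
Hypothesis p_gt0 : 0 < p.
Hypothesis orbit_lp : forall i n, (i < N)%nat -> in_lp p (Nat.iter n (T i) x).
Hypothesis x_hc : d_hypercyclic_vector p N T x.

Lemma d_hypercyclic_vector_lp_sum ys : (forall i, (i < N)%nat -> in_lp p (ys i)) ->
  forall r, 0 < r -> exists n, forall i, (i < N)%nat ->
  lp_sum p (seq_sub (Nat.iter n (T i) x) (ys i)) < r.
Proof.
  intros Hys r Hr; assert (Hroot : 0 < rpow r (/ p)) by (apply rpow_gt0; exact Hr).
  destruct (proj2 x_hc ys Hys _ Hroot) as [n Hn]; exists n; intros i Hi.
  rewrite <- (rpow_inv_rpow r p) by lra.
  apply lp_norm_lt_iff; [exact p_gt0 | apply in_lp_sub; auto | exact Hroot | apply Hn; exact Hi].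
Qed.

Lemma d_hypercyclic_vector_late (abs_onto : forall r, 0 < r -> exists a : K, abs a = r) :
  (1 <= N)%nat -> forall ys, (forall i, (i < N)%nat -> in_lp p (ys i)) ->
  forall r, 0 < r -> forall n0, exists n, (n0 <= n)%nat /\
  forall i, (i < N)%nat -> lp_sum p (seq_sub (Nat.iter n (T i) x) (ys i)) < r.
Proof.
  intros HN ys Hys r Hr n0.
  set (c := rpow 3 p); assert (Hc : 1 <= c) by (rewrite <- (rpow_1l p); apply rpow_le_compat; lra).
  set (q := r / (c * (1 + c) + 1)).
  assert (Hq : 0 < q) by (apply Rdiv_lt_0_compat; nra).
  assert (Hqr : c * (q + c * q) < r).
  { replace (c * (q + c * q)) with (r - q) by (unfold q; field; nra); lra. }
  assert (Hq_lt : q < r) by nra.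
  set (alpha := rpow q (/ p)); assert (Halpha : 0 < alpha) by (apply rpow_gt0; exact Hq).
  assert (Halpha_p : rpow alpha p = q) by (apply rpow_inv_rpow; lra).
  (* Perturbing [ys 0] at a coordinate [k] where it and the first [n0] iterates are small
     forces every approximation of the perturbed target to happen after time [n0]. *)
  destruct (eventually_forall_lt (fun n m => abs (Nat.iter n (T 0%nat) x m) < alpha) n0)
    as [M1 HM1]; [intros n _; apply (abs_eventually_lt p); auto |].
  destruct (abs_eventually_lt p p_gt0 (ys 0%nat) alpha (Hys 0%nat HN) Halpha) as [M2 HM2].
  set (k := Nat.max M1 M2); destruct (abs_onto (3 * alpha)) as [a Ha]; [lra|].
  set (ys' i := if (i =? 0)%nat then seq_add (ys 0%nat) (spike k a) else ys i).
  assert (Hys' : forall i, (i < N)%nat -> in_lp p (ys' i)).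
  { intros i Hi; unfold ys'; destruct (i =? 0)%nat; [|auto].
    apply (in_lp_add p p_gt0); [auto | apply lp_spike]. }
  destruct (d_hypercyclic_vector_lp_sum ys' Hys' q Hq) as [n Hn]; exists n; split.
  - destruct (Nat.le_gt_cases n0 n) as [|Hlt]; [assumption | exfalso].
    specialize (Hn 0%nat HN); apply (Rlt_not_le _ _ Hn); rewrite <- Halpha_p.
    apply (lp_sum_ge_coord p p_gt0 _ k); [apply in_lp_sub; auto | split; [lra|]].
    unfold ys', seq_sub, seq_add, spike; simpl; rewrite Nat.eqb_refl.
    pose proof (abs_le_minus_plus (Nat.iter n (T 0%nat) x k) (ys 0%nat k) a).
    pose proof (HM1 k (Nat.le_max_l _ _) n Hlt); pose proof (HM2 k (Nat.le_max_r _ _)); lra.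
  - intros i Hi; specialize (Hn i Hi); destruct (Nat.eq_dec i 0) as [->|Hi0].
    2: unfold ys' in Hn; rewrite (proj2 (Nat.eqb_neq i 0) Hi0) in Hn; lra.
    pose proof (lp_sum_sub_spike_le p (Nat.iter n (T 0%nat) x) (ys 0%nat) k a p_gt0
      (in_lp_sub p p_gt0 _ _ (orbit_lp 0 n HN) (Hys' 0%nat HN))) as Hle.
    rewrite Ha, rpow_mult_distr, Halpha_p in Hle by lra; fold c in Hle.
    unfold ys' in Hn; simpl in Hn; nra.
Qed.

End LateReturns.

(** * Windows *)

Section Windows.

Variables start stop : nat -> nat.
Hypothesis window_le : forall k, (start k <= stop k)%nat.
Hypothesis window_gap : forall k, (stop k < start (S k))%nat.

Definition in_window (k t : nat) : bool := (start k <=? t)%nat && (t <? stop k)%nat.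

Lemma in_windowP k t : in_window k t = true <-> (start k <= t < stop k)%nat.
Proof. unfold in_window; rewrite Bool.andb_true_iff, Nat.leb_le, Nat.ltb_lt; tauto. Qed.

Fixpoint window_search (k t : nat) : option nat :=
  if in_window k t then Some k
  else match k with 0 => None | S k' => window_search k' t end.

(* Windows lie to the right of their index, so the window containing [t] has index at most [t]. *)
Definition window_index (t : nat) : option nat := window_search t t.

Lemma stop_lt_start k k' : (k < k')%nat -> (stop k < start k')%nat.
Proof.
  induction 1; [apply window_gap |].
  pose proof (window_le m); pose proof (window_gap m); lia.
Qed.

Lemma le_start k : (k <= start k)%nat.
Proof. induction k; [lia | pose proof (window_le k); pose proof (window_gap k); lia]. Qed.

Lemma window_unique k k' t : (start k <= t < stop k)%nat -> (start k' <= t < stop k')%nat -> k = k'.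
Proof.
  intros Hk Hk'; destruct (Nat.lt_total k k') as [Hlt | [Heq | Hlt]]; [| exact Heq |];
    pose proof (stop_lt_start _ _ Hlt); lia.
Qed.

Lemma window_search_spec k t j :
  window_search k t = Some j <-> (j <= k)%nat /\ (start j <= t < stop j)%nat.
Proof.
  induction k as [|k IH]; simpl; destruct (in_window _ t) eqn:E.
  - rewrite in_windowP in E; split; [intros [= <-]; split; [lia | exact E] |].
    intros [Hj _]; f_equal; lia.
  - split; [discriminate|]; intros [Hj Ht]; replace j with 0%nat in Ht by lia.
    apply in_windowP in Ht; congruence.
  - rewrite in_windowP in E; split; [intros [= <-]; split; [lia | exact E] |].
    intros [_ Ht]; f_equal; exact (window_unique _ _ _ E Ht).
  - rewrite IH; split; [intros [Hj Ht]; split; [lia | exact Ht] |].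
    intros [Hj Ht]; split; [|exact Ht].
    destruct (Nat.eq_dec j (S k)) as [->|]; [apply in_windowP in Ht; congruence | lia].
Qed.

Lemma window_indexP t k : window_index t = Some k <-> (start k <= t < stop k)%nat.
Proof.
  unfold window_index; rewrite window_search_spec; split; [tauto|].
  intros Ht; split; [pose proof (le_start k); lia | exact Ht].
Qed.

End Windows.

Fixpoint chain_stop (F : nat -> nat -> nat * nat) (k : nat) : nat :=
  snd (F k (match k with 0 => 0%nat | S k' => chain_stop F k' end)).

Lemma windows_choice (P : nat -> nat -> nat -> Prop) :
  (forall k prev, exists n b, (prev < n <= b)%nat /\ P k n b) ->
  exists start stop : nat -> nat, forall k,
    (start k <= stop k)%nat /\ (stop k < start (S k))%nat /\ P k (start k) (stop k).
Proof.
  intros Hstep.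
  destruct (choice (fun kp nb => (snd kp < fst nb <= snd nb)%nat /\ P (fst kp) (fst nb) (snd nb)))
    as [F HF]; [intros [k prev]; destruct (Hstep k prev) as (n & b & H); exists (n, b); exact H|].
  set (prev k := match k with 0 => 0%nat | S k' => chain_stop (fun k q => F (k, q)) k' end).
  exists (fun k => fst (F (k, prev k))), (chain_stop (fun k q => F (k, q))); intro k.
  assert (Hstop : forall k, chain_stop (fun k q => F (k, q)) k = snd (F (k, prev k)))
    by (intros [|]; reflexivity).
  pose proof (HF (k, prev k)) as [Hk HP]; pose proof (HF (S k, prev (S k))) as [HSk _].
  simpl in *; rewrite Hstop; repeat split; [lia | | exact HP].
  change (prev (S k)) with (chain_stop (fun k q => F (k, q)) k) in HSk; rewrite Hstop in HSk; lia.
Qed.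

(** * The manifold *)

Definition supported {K : AbsRing} (c : nat -> nat -> K) (L : nat) : Prop :=
  forall t j, (L < t)%nat \/ (L < j)%nat -> c t j = zero.

Lemma supported_bounded {K : AbsRing} (c : nat -> nat -> K) L :
  supported c L -> exists C, 0 <= C /\ forall t j, abs (c t j) <= C.
Proof.
  intros Hc; set (row t := sum_n (fun j => abs (c t j)) L).
  assert (Hrow : forall t, 0 <= row t).
  { intro t; unfold row; rewrite sum_n_Reals; apply cond_pos_sum; intro; apply abs_ge_0. }
  assert (HC0 : 0 <= sum_n row L) by (rewrite sum_n_Reals; apply cond_pos_sum; exact Hrow).
  exists (sum_n row L); split; [exact HC0 |]; intros t j.
  destruct (Nat.le_gt_cases t L) as [Ht|Ht]; [destruct (Nat.le_gt_cases j L) as [Hj|Hj]|].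
  2, 3: rewrite Hc, abs_zero by lia; exact HC0.
  assert (Habs : forall j, 0 <= abs (c t j)) by (intro; apply abs_ge_0).
  apply Rle_trans with (row t).
  - apply Rle_trans with (sum_n (fun j => abs (c t j)) j);
      [apply (term_le_sum_n _ Habs) | apply (sum_n_le_mono _ Habs); exact Hj].
  - apply Rle_trans with (sum_n row t);
      [apply (term_le_sum_n _ Hrow) | apply (sum_n_le_mono _ Hrow); exact Ht].
Qed.

Section Manifold.

Context {K : AbsRing}.
Variables (p : R) (x : nat -> K) (start stop : nat -> nat) (label : nat -> nat * nat).
Hypothesis p_gt0 : 0 < p.
Hypothesis x_lp : in_lp p x.
Hypothesis window_le : forall k, (start k <= stop k)%nat.
Hypothesis window_gap : forall k, (stop k < start (S k))%nat.

Definition window_coef (c : nat -> nat -> K) (t : nat) : K :=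
  match window_index start stop t with
  | Some k => c (fst (label k)) (snd (label k))
  | None => zero
  end.

(* With [W t j] the union of the windows labelled [(t, j)], [manifold_vec c L] is the finite
   combination [sum_(t, j) c t j (e_t + 1_(W t j) x)]. *)
Definition manifold_vec (c : nat -> nat -> K) (L t : nat) : K :=
  plus (sum_n (c t) L) (mult (window_coef c t) (x t)).

Definition manifold (y : nat -> K) : Prop :=
  exists c L, supported c L /\ forall t, y t = manifold_vec c L t.

Lemma manifold_zero : manifold seq_zero.
Proof.
  exists (fun _ _ => zero), 0%nat; split; [intros t j _; reflexivity|].
  intro t; unfold manifold_vec, window_coef, seq_zero; rewrite sum_O.
  destruct (window_index _ _ t); rewrite Kmult_zero_l, plus_zero_l; reflexivity.
Qed.

Lemma manifold_add y1 y2 : manifold y1 -> manifold y2 -> manifold (seq_add y1 y2).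
Proof.
  intros (c1 & L1 & Hc1 & E1) (c2 & L2 & Hc2 & E2).
  exists (fun t j => plus (c1 t j) (c2 t j)), (Nat.max L1 L2); split.
  { intros t j Htj; rewrite Hc1, Hc2 by lia; apply plus_zero_l. }
  intro t; unfold seq_add, manifold_vec; rewrite E1, E2, sum_n_plus.
  rewrite (sum_n_trailing_zeros (c1 t) L1), (sum_n_trailing_zeros (c2 t) L2)
    by (intros; try apply Hc1; try apply Hc2; lia).
  replace (window_coef (fun t j => plus (c1 t j) (c2 t j)) t)
    with (plus (window_coef c1 t) (window_coef c2 t))
    by (unfold window_coef; destruct (window_index _ _ t); [reflexivity | apply plus_zero_l]).
  rewrite Kmult_plus_distr_r; apply plus_plus_swap.
Qed.

Lemma manifold_scal a y : manifold y -> manifold (seq_scal a y).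
Proof.
  intros (c & L & Hc & E); exists (fun t j => mult a (c t j)), L; split.
  { intros t j Htj; rewrite Hc by exact Htj; apply Kmult_zero_r. }
  intro t; unfold seq_scal; rewrite E; unfold manifold_vec.
  replace (window_coef (fun t j => mult a (c t j)) t) with (mult a (window_coef c t))
    by (unfold window_coef; destruct (window_index _ _ t); [reflexivity | apply Kmult_zero_r]).
  rewrite Ksum_n_mult_l, Kmult_plus_distr_l, mult_assoc; reflexivity.
Qed.

Lemma abs_window_coef_le (c : nat -> nat -> K) C : (forall t j, abs (c t j) <= C) -> 0 <= C ->
  forall t, abs (window_coef c t) <= C.
Proof.
  intros HC HC0 t; unfold window_coef.
  destruct (window_index _ _ t); [apply HC | rewrite abs_zero; exact HC0].
Qed.

Lemma coord_part_supported (c : nat -> nat -> K) L t :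
  supported c L -> (L < t)%nat -> sum_n (c t) L = zero.
Proof. intros Hc Ht; apply sum_n_zero; intros j _; apply Hc; left; exact Ht. Qed.

Lemma manifold_in_lp y : manifold y -> in_lp p y.
Proof.
  intros (c & L & Hc & E); destruct (supported_bounded c L Hc) as (C & HC0 & HC).
  apply (lp_dominated2 p p_gt0 y (fun t => sum_n (c t) L) x 1 C); try lra; try assumption.
  - apply (in_lp_finite_support p _ (S L)); intros; apply coord_part_supported; auto; lia.
  - intro t; rewrite E; unfold manifold_vec; eapply Rle_trans; [apply abs_triangle|].
    pose proof (abs_window_coef_le c C HC HC0 t); pose proof (abs_ge_0 (x t)).
    pose proof (abs_mult (window_coef c t) (x t)); nra.
Qed.

Lemma manifold_vec_coef_nonzero (c : nat -> nat -> K) L : ~ (forall t, manifold_vec c L t = zero) ->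
  exists t j, c t j <> zero.
Proof.
  intros Hy; apply NNPP; intro Hc; apply Hy; intro t.
  assert (Hz : forall t j, c t j = zero) by (intros t' j; apply NNPP; eauto).
  unfold manifold_vec, window_coef; rewrite sum_n_zero by (intros; apply Hz).
  destruct (window_index _ _ t); rewrite ?Hz, Kmult_zero_l; apply plus_zero_l.
Qed.

Section Density.

Variable R : nat -> nat.
Hypothesis tail_R : forall j, lp_sum p (restrict (fun m => R j <=? m)%nat x) < / INR (S j).
Hypothesis start_R : forall k, (R (snd (label k)) <= start k)%nat.

Lemma abs_window_coef_mult_le (c : nat -> nat -> K) J C :
  (forall t j, j <> J -> c t j = zero) -> (forall t j, abs (c t j) <= C) -> 0 <= C ->
  forall t, abs (mult (window_coef c t) (x t)) <= C * abs (restrict (fun m => R J <=? m)%nat x t).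
Proof.
  intros HJ HC HC0 t; pose proof (abs_ge_0 (restrict (fun m => R J <=? m)%nat x t)).
  unfold window_coef; destruct (window_index start stop t) as [k|] eqn:Ek.
  - apply window_indexP in Ek; [|exact window_le | exact window_gap].
    destruct (Nat.eq_dec (snd (label k)) J) as [<-|HkJ].
    + unfold restrict; rewrite (proj2 (Nat.leb_le _ _)) by (pose proof (start_R k); lia).
      eapply Rle_trans; [apply abs_mult | apply Rmult_le_compat_r; [apply abs_ge_0 | apply HC]].
    + rewrite (HJ _ _ HkJ), Kmult_zero_l, abs_zero; apply Rmult_le_pos; assumption.
  - rewrite Kmult_zero_l, abs_zero; apply Rmult_le_pos; assumption.
Qed.

Definition truncation_coef (y : nat -> K) (M J : nat) : nat -> nat -> K :=
  fun t j => if andb (j =? J)%nat (t <? M)%nat then y t else zero.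

Lemma truncation_coef_supported y M J : supported (truncation_coef y M J) (Nat.max M J).
Proof.
  intros t j Htj; unfold truncation_coef.
  destruct (Nat.eqb_spec j J), (Nat.ltb_spec t M); simpl; reflexivity || lia.
Qed.

Lemma manifold_vec_truncation_le y M J C : (forall t, (t < M)%nat -> abs (y t) <= C) -> 0 <= C ->
  forall t, abs (seq_sub (manifold_vec (truncation_coef y M J) (Nat.max M J)) y t)
  <= 1 * abs (restrict (fun t => M <=? t)%nat y t) + C * abs (restrict (fun m => R J <=? m)%nat x t).
Proof.
  intros HC HC0 t; set (c := truncation_coef y M J).
  assert (Hcoord : sum_n (c t) (Nat.max M J) = restrict (fun t => t <? M)%nat y t).
  { rewrite (sum_n_single _ J); [| intros j Hj; unfold c, truncation_coef | lia].
    - unfold c, truncation_coef, restrict; rewrite Nat.eqb_refl; reflexivity.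
    - rewrite (proj2 (Nat.eqb_neq _ _) Hj); reflexivity. }
  assert (Hc : forall t j, abs (c t j) <= C).
  { intros t' j; unfold c, truncation_coef; destruct (andb (j =? J) (t' <? M))%nat eqn:E.
    - apply andb_prop in E; destruct E as [_ E]; apply Nat.ltb_lt in E; apply HC; exact E.
    - rewrite abs_zero; exact HC0. }
  pose proof (abs_window_coef_mult_le c J C ltac:(intros t' j Hj; unfold c, truncation_coef;
    rewrite (proj2 (Nat.eqb_neq _ _) Hj); reflexivity) Hc HC0 t).
  unfold seq_sub, manifold_vec; rewrite Hcoord.
  unfold restrict in *; destruct (Nat.ltb_spec t M), (Nat.leb_spec M t); try lia.
  - rewrite Kminus_plus_l, abs_zero; lra.
  - rewrite plus_zero_l; pose proof (abs_minus_le (mult (window_coef c t) (x t)) (y t)); lra.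
Qed.

Lemma manifold_dense y : in_lp p y ->
  forall eps, 0 < eps -> exists z, manifold z /\ lp_norm p (seq_sub z y) < eps.
Proof.
  intros Hy eps Heps.
  set (c3 := rpow 3 p); assert (Hc3 : 0 < c3) by (apply rpow_gt0; lra).
  set (q := rpow eps p / (2 * c3)).
  assert (Hq : 0 < q) by (apply Rdiv_lt_0_compat; [apply rpow_gt0 |]; lra).
  destruct (lp_restrict_tail p p_gt0 y q Hy Hq) as [M HM_tail].
  set (Cy := sum_n (fun t => abs (y t)) M).
  assert (Habs : forall t, 0 <= abs (y t)) by (intro; apply abs_ge_0).
  assert (HCy : forall t, (t <= M)%nat -> abs (y t) <= Cy).
  { intros t Ht; eapply Rle_trans;
      [apply (term_le_sum_n _ Habs) | apply (sum_n_le_mono _ Habs); exact Ht]. }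
  assert (HCy0 : 0 <= Cy) by (eapply Rle_trans; [apply Habs | apply (HCy 0%nat); lia]).
  assert (HCyp : 0 <= rpow Cy p) by apply rpow_ge0.
  destruct (inv_succ_lt (q / (rpow Cy p + 1)) 0) as (J & _ & HJ);
    [apply Rdiv_lt_0_compat; lra |].
  exists (manifold_vec (truncation_coef y M J) (Nat.max M J)); split.
  { exists (truncation_coef y M J), (Nat.max M J).
    split; [apply truncation_coef_supported | reflexivity]. }
  destruct (lp_dominated2 p p_gt0 (seq_sub (manifold_vec (truncation_coef y M J) (Nat.max M J)) y)
    (restrict (fun t => M <=? t)%nat y) (restrict (fun m => R J <=? m)%nat x) 1 Cy)
    as [Hlp Hle]; try lra; try (apply in_lp_restrict; assumption).
  { apply manifold_vec_truncation_le; [intros t Ht; apply HCy; lia | exact HCy0]. }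
  apply (lp_norm_lt_iff p p_gt0 _ _ Hlp Heps).
  pose proof (HM_tail (fun t => M <=? t)%nat ltac:(intros m Hm; apply Nat.leb_le; exact Hm)) as Hy_tail.
  assert (Hx_tail : rpow Cy p * lp_sum p (restrict (fun m => R J <=? m)%nat x) <= q).
  { pose proof (tail_R J); pose proof (Rinv_0_lt_compat _ (lt_0_INR (S J) ltac:(lia))).
    apply (Rmult_lt_compat_r (rpow Cy p + 1)) in HJ; [|lra].
    unfold Rdiv in HJ; rewrite Rmult_assoc, Rinv_l, Rmult_1_r in HJ by lra; nra. }
  rewrite rpow_1l in Hle; fold c3 in Hle.
  replace (rpow eps p) with (c3 * (q + q)) by (unfold q; field; lra); nra.
Qed.

End Density.

Section Hypercyclicity.

Variables (N : nat) (fs : nat -> nat -> nat) (ws : nat -> nat -> K) (target : nat -> nat).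
Hypothesis shifts : forall i, (i < N)%nat -> pseudo_shift_data (fs i) (ws i).
Hypothesis K_comm : forall a b : K, mult a b = mult b a.
Hypothesis K_inv : forall a : K, a <> zero -> exists b : K, mult b a = one.

Let T i := pseudo_shift (fs i) (ws i).

Hypothesis x_hc : d_hypercyclic_vector p N T x.
Hypothesis start_near_target : forall k i, (i < N)%nat ->
  lp_sum p (seq_sub (Nat.iter (start k) (T i) x) (Nat.iter (target k) (T i) x)) < / INR (S k).
Hypothesis window_holds_orbit : forall k i, (i < N)%nat ->
  lp_sum p (restrict (fun m => stop k <=? Nat.iter (start k) (fs i) m)%nat (Nat.iter (start k) (T i) x))
  < / INR (S k).
Hypothesis tasks_recur : forall l n s, exists k, (s <= k)%nat /\ label k = l /\ target k = n.

Lemma iter_manifold_vec c L i n m : supported c L -> (L < n)%nat -> (i < N)%nat ->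
  Nat.iter n (T i) (manifold_vec c L) m
  = mult (window_coef c (Nat.iter n (fs i) m)) (Nat.iter n (T i) x m).
Proof.
  intros Hc HLn Hi.
  rewrite (iter_pseudo_shift_local (fs i) (ws i) (shifts i Hi) n _
    (fun t => mult (window_coef c t) (x t))).
  - apply iter_pseudo_shift_mult; exact K_comm.
  - intros t Ht; unfold manifold_vec; rewrite coord_part_supported by (auto; lia); apply plus_zero_l.
Qed.

Lemma window_coef_sub_le c C k i (v : nat -> K) m : (forall t j, abs (c t j) <= C) -> 0 <= C ->
  (i < N)%nat ->
  abs (minus (window_coef c (Nat.iter (start k) (fs i) m)) (c (fst (label k)) (snd (label k))))
    * abs (v m)
  <= 2 * C * abs (restrict (fun m => stop k <=? Nat.iter (start k) (fs i) m)%nat v m).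
Proof.
  intros HC HC0 Hi; unfold restrict; set (fm := Nat.iter (start k) (fs i) m).
  pose proof (abs_ge_0 (v m)); destruct (Nat.leb_spec (stop k) fm).
  - pose proof (abs_minus_le (window_coef c fm) (c (fst (label k)) (snd (label k)))).
    pose proof (abs_window_coef_le c C HC HC0 fm); pose proof (HC (fst (label k)) (snd (label k))); nra.
  - destruct (shifts i Hi) as (f_incr & f_0 & _).
    unfold window_coef; rewrite (proj2 (window_indexP start stop window_le window_gap _ k))
      by (pose proof (iter_strict_incr_ge (fs i) f_incr f_0 (start k) m); unfold fm; lia).
    replace (abs (minus _ _)) with 0; [rewrite abs_zero; nra |].
    rewrite (@minus_eq_zero (AbsRing.AbelianGroup K)); symmetry; apply abs_zero.
Qed.

Lemma manifold_orbit_estimate c L C k i (z : nat -> K) :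
  supported c L -> (forall t j, abs (c t j) <= C) -> 0 <= C -> (L < start k)%nat -> (i < N)%nat ->
  in_lp p z ->
  lp_sum p (seq_sub (Nat.iter (start k) (T i) (manifold_vec c L))
                    (fun m => mult (c (fst (label k)) (snd (label k))) (z m)))
  <= rpow 3 p * rpow (2 * C) p * (2 * / INR (S k) + lp_sum p (seq_sub (Nat.iter (target k) (T i) x) z)).
Proof.
  intros Hc HC HC0 HLk Hi Hz.
  set (c0 := c (fst (label k)) (snd (label k))).
  set (I := Nat.iter (start k) (T i) x); set (I' := Nat.iter (target k) (T i) x).
  set (u := restrict (fun m => stop k <=? Nat.iter (start k) (fs i) m)%nat I).
  pose proof (orbits_in_lp p N fs ws x p_gt0 shifts x_lp i) as HI.
  destruct (lp_dominated3 p p_gt0 (seq_sub (Nat.iter (start k) (T i) (manifold_vec c L))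
    (fun m => mult c0 (z m))) u (seq_sub I I') (seq_sub I' z) (2 * C) (2 * C) (2 * C)) as [_ Hle];
    try lra.
  - apply (in_lp_restrict p p_gt0), HI, Hi.
  - apply (in_lp_sub p p_gt0); apply HI, Hi.
  - apply (in_lp_sub p p_gt0); [apply HI, Hi | exact Hz].
  - intro m; unfold seq_sub; rewrite iter_manifold_vec by (auto; lia).
    eapply Rle_trans; [apply (abs_mult_minus3_le _ c0 (I m) (I' m) (z m)) |].
    pose proof (window_coef_sub_le c C k i I m HC HC0 Hi); pose proof (HC (fst (label k)) (snd (label k))).
    pose proof (abs_ge_0 (minus (I m) (I' m))); pose proof (abs_ge_0 (minus (I' m) (z m))).
    unfold c0, u; nra.
  - assert (Hsmall : lp_sum p u + lp_sum p (seq_sub I I') <= 2 * / INR (S k)).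
    { pose proof (window_holds_orbit k i Hi); pose proof (start_near_target k i Hi).
      unfold u, I, I'; lra. }
    assert (0 <= rpow 3 p * rpow (2 * C) p * (2 * / INR (S k) - (lp_sum p u + lp_sum p (seq_sub I I'))))
      by (apply Rmult_le_pos; [apply Rmult_le_pos; apply rpow_ge0 | lra]).
    eapply Rle_trans; [exact Hle | nra].
Qed.

Lemma manifold_vec_orbit_approx c L t0 j0 (zs : nat -> nat -> K) : supported c L ->
  (forall i, (i < N)%nat -> in_lp p (zs i)) -> forall r, 0 < r -> exists n, forall i, (i < N)%nat ->
  lp_sum p (seq_sub (Nat.iter n (T i) (manifold_vec c L)) (fun m => mult (c t0 j0) (zs i m))) < r.
Proof.
  intros Hc Hzs r Hr; destruct (supported_bounded c L Hc) as (C & HC0 & HC).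
  set (A := rpow 3 p * rpow (2 * C) p); assert (HA : 0 <= A) by (apply Rmult_le_pos; apply rpow_ge0).
  set (d := r / (3 * A + 1)); assert (Hd : 0 < d) by (apply Rdiv_lt_0_compat; lra).
  assert (HAd : A * (2 * d + d) < r).
  { replace (A * (2 * d + d)) with (r - d) by (unfold d; field; lra); lra. }
  destruct (d_hypercyclic_vector_lp_sum p N T x p_gt0 (orbits_in_lp p N fs ws x p_gt0 shifts x_lp)
    x_hc zs Hzs d Hd) as [n' Hn'].
  destruct (inv_succ_lt d (S L) Hd) as (s & HsL & Hs).
  destruct (tasks_recur (t0, j0) n' s) as (k & Hks & Hlab & Htgt).
  exists (start k); intros i Hi; pose proof (le_start start stop window_le window_gap k).
  pose proof (manifold_orbit_estimate c L C k i (zs i) Hc HC HC0 ltac:(lia) Hi (Hzs i Hi)) as Hest.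
  rewrite Hlab, Htgt in Hest; fold A in Hest; specialize (Hn' i Hi).
  assert (Hk : / INR (S k) < d).
  { apply Rle_lt_trans with (2 := Hs), Rinv_le_contravar; [apply lt_0_INR; lia | apply le_INR; lia]. }
  eapply Rle_lt_trans; [exact Hest |].
  apply Rle_lt_trans with (2 := HAd); apply Rmult_le_compat_l; lra.
Qed.

Lemma manifold_d_hypercyclic y : manifold y -> ~ (forall m, y m = zero) ->
  d_hypercyclic_vector p N T y.
Proof.
  intros Hy Hy0; split; [apply manifold_in_lp; exact Hy |].
  destruct Hy as (c & L & Hc & E).
  replace y with (manifold_vec c L) in * by (symmetry; apply functional_extensionality; exact E).
  destruct (manifold_vec_coef_nonzero c L Hy0) as (t0 & j0 & Hc0); destruct (K_inv _ Hc0) as [ci Hci].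
  intros ys Hys eps Heps.
  set (zs i m := mult ci (ys i m)).
  assert (Hzs : forall i, (i < N)%nat -> in_lp p (zs i)).
  { intros i Hi; apply (lp_dominated1 p p_gt0 _ (ys i) (abs ci) (abs_ge_0 ci) (Hys i Hi)).
    intro m; apply abs_mult. }
  destruct (manifold_vec_orbit_approx c L t0 j0 zs Hc Hzs _ (rpow_gt0 eps p Heps)) as [n Hn].
  exists n; intros i Hi.
  replace (ys i) with (fun m => mult (c t0 j0) (zs i m)).
  2: { apply functional_extensionality; intro m; unfold zs; rewrite mult_assoc.
       rewrite (K_comm (c t0 j0)), Hci; apply mult_one_l. }
  apply (lp_norm_lt_iff p p_gt0); [apply (in_lp_sub p p_gt0) | exact Heps | apply Hn, Hi].
  - apply (orbits_in_lp p N fs ws _ p_gt0 shifts); [apply manifold_in_lp | exact Hi].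
    exists c, L; split; [exact Hc | reflexivity].
  - apply (lp_dominated1 p p_gt0 _ (zs i) (abs (c t0 j0)) (abs_ge_0 _) (Hzs i Hi)).
    intro m; apply abs_mult.
Qed.

End Hypercyclicity.

End Manifold.

(** * Dense d-hypercyclic manifolds of pseudo-shifts *)

(* Window [k] is the Cantor code of a triple (label, target time, s); the unused component s
   makes every pair of a label and a target time recur at arbitrarily large [k]. *)
Definition window_label (k : nat) : nat * nat :=
  Cantor.of_nat (fst (Cantor.of_nat (fst (Cantor.of_nat k)))).

Definition window_target (k : nat) : nat := snd (Cantor.of_nat (fst (Cantor.of_nat k))).

Lemma window_tasks_recur l n s : exists k, (s <= k)%nat /\ window_label k = l /\ window_target k = n.
Proof.
  exists (Cantor.to_nat (Cantor.to_nat (Cantor.to_nat l, n), s)).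
  unfold window_label, window_target; rewrite !Cantor.cancel_of_to; cbn [fst snd].
  rewrite Cantor.cancel_of_to; cbn [fst snd]; rewrite Cantor.cancel_of_to.
  split; [|split; reflexivity].
  pose proof (Cantor.to_nat_non_decreasing (Cantor.to_nat (Cantor.to_nat l, n)) s); lia.
Qed.

Section Construction.

Context {K : AbsRing}.
Variables (p : R) (N : nat) (fs : nat -> nat -> nat) (ws : nat -> nat -> K) (x : nat -> K).
Hypothesis p_gt0 : 0 < p.
Hypothesis N_ge1 : (1 <= N)%nat.
Hypothesis shifts : forall i, (i < N)%nat -> pseudo_shift_data (fs i) (ws i).
Hypothesis abs_onto : forall r, 0 < r -> exists a : K, abs a = r.

Let T i := pseudo_shift (fs i) (ws i).

Hypothesis x_hc : d_hypercyclic_vector p N T x.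

Let orbit_in_lp := orbits_in_lp p N fs ws x p_gt0 shifts (proj1 x_hc).

Lemma orbit_tail_in_window n d : 0 < d -> exists B, forall b, (B <= b)%nat -> forall i, (i < N)%nat ->
  lp_sum p (restrict (fun m => b <=? Nat.iter n (fs i) m)%nat (Nat.iter n (T i) x)) < d.
Proof.
  intros Hd; apply eventually_forall_lt; intros i Hi.
  destruct (lp_restrict_tail p p_gt0 _ d (orbit_in_lp i n Hi) Hd) as [M HM].
  exists (Nat.iter n (fs i) M); intros b Hb; apply HM; intros m Hm; apply Nat.leb_le in Hm.
  destruct (Nat.le_gt_cases M m) as [|Hlt]; [assumption|].
  destruct (shifts i Hi) as [f_incr _]; pose proof (iter_strict_incr_lt (fs i) f_incr n m M Hlt); lia.
Qed.

Lemma window_step (R : nat -> nat) k prev : exists n b, (prev < n <= b)%nat /\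
  (R (snd (window_label k)) <= n)%nat /\
  (forall i, (i < N)%nat ->
    lp_sum p (seq_sub (Nat.iter n (T i) x) (Nat.iter (window_target k) (T i) x)) < / INR (S k)) /\
  (forall i, (i < N)%nat ->
    lp_sum p (restrict (fun m => b <=? Nat.iter n (fs i) m)%nat (Nat.iter n (T i) x)) < / INR (S k)).
Proof.
  assert (Hk : 0 < / INR (S k)) by (apply Rinv_0_lt_compat, lt_0_INR; lia).
  destruct (d_hypercyclic_vector_late p N T x p_gt0 orbit_in_lp x_hc abs_onto N_ge1
    (fun i => Nat.iter (window_target k) (T i) x) (fun i Hi => orbit_in_lp i _ Hi) _ Hk
    (Nat.max (S prev) (R (snd (window_label k))))) as (n & Hn & Hnear).
  destruct (orbit_tail_in_window n _ Hk) as [B HB].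
  exists n, (Nat.max n B); repeat split; try lia; [exact Hnear |].
  intros i Hi; apply HB; [lia | exact Hi].
Qed.

Lemma dense_d_hypercyclic_manifold (K_comm : forall a b : K, mult a b = mult b a)
  (K_inv : forall a : K, a <> zero -> exists b : K, mult b a = one) :
  has_dense_d_hypercyclic_manifold p N T.
Proof.
  destruct (choice (fun j M => lp_sum p (restrict (fun m => M <=? m)%nat x) < / INR (S j)))
    as [R HR].
  { intro j; destruct (lp_restrict_tail p p_gt0 x (/ INR (S j)) (proj1 x_hc)) as [M HM];
      [apply Rinv_0_lt_compat, lt_0_INR; lia|].
    exists M; apply HM; intros m Hm; apply Nat.leb_le; exact Hm. }
  destruct (windows_choice _ (window_step R)) as (start & stop & Hwin).
  assert (window_le : forall k, (start k <= stop k)%nat) by apply Hwin.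
  assert (window_gap : forall k, (stop k < start (S k))%nat) by apply Hwin.
  exists (manifold x start stop window_label); split; [|split; [|split; [|split; [|split]]]].
  - intro y; apply (manifold_in_lp p x start stop window_label p_gt0 (proj1 x_hc)).
  - apply manifold_zero.
  - apply manifold_add.
  - apply manifold_scal.
  - apply (manifold_dense p x start stop window_label p_gt0 (proj1 x_hc) window_le window_gap R HR).
    intro k; apply Hwin.
  - intros y Hy Hy0.
    apply (manifold_d_hypercyclic p x start stop window_label p_gt0 (proj1 x_hc) window_le window_gap
      N fs ws window_target); auto; try apply Hwin; apply window_tasks_recur.
Qed.

End Construction.

Lemma d_hypercyclic_of_dense_manifold {K : AbsRing} p N (T : nat -> (nat -> K) -> (nat -> K)) :
  0 < p -> has_dense_d_hypercyclic_manifold p N T -> d_hypercyclic p N T.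
Proof.
  intros Hp (M & HM_lp & _ & _ & _ & Hdense & Hhc).
  destruct (lp_spike p 0 (@one (AbsRing.Ring K))) as [He _].
  destruct (Hdense _ He 1 Rlt_0_1) as (y & HMy & Hy).
  exists y; apply Hhc; [exact HMy |]; intros Hy0.
  assert (Hsub : in_lp p (seq_sub y (spike 0 one))) by (apply in_lp_sub; auto).
  apply (lp_norm_lt_iff p Hp _ _ Hsub Rlt_0_1) in Hy; rewrite rpow_1l in Hy.
  assert (Hcoord : abs (seq_sub y (spike 0 one) 0%nat) = 1).
  { unfold seq_sub, spike; simpl; rewrite Hy0; unfold minus.
    rewrite plus_zero_l, abs_opp; apply abs_one. }
  pose proof (lp_sum_ge_coord p Hp _ 0 1 Hsub ltac:(lra)); rewrite rpow_1l in *; lra.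
Qed.

Record abs_field (K : AbsRing) : Prop := {
  abs_field_comm : forall a b : K, mult a b = mult b a;
  abs_field_inv : forall a : K, a <> zero -> exists b : K, mult b a = one;
  abs_field_onto : forall r, 0 < r -> exists a : K, abs a = r }.

Lemma abs_field_R : abs_field R_AbsRing.
Proof.
  split; [exact Rmult_comm | |].
  - intros a Ha; exists (/ a); exact (Rinv_l a Ha).
  - intros r Hr; exists r; exact (Rabs_pos_eq r (Rlt_le _ _ Hr)).
Qed.

Lemma abs_field_C : abs_field C_AbsRing.
Proof.
  split; [exact Cmult_comm | |].
  - intros a Ha; exists (/ a)%C; exact (Cinv_l a Ha).
  - intros r Hr; exists (RtoC r); change (Cmod (RtoC r) = r); rewrite Cmod_R; apply Rabs_pos_eq; lra.
Qed.

Lemma corollary_statement_of_abs_field (K : AbsRing) : abs_field K -> @corollary_statement K.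
Proof.
  intros HK p N fs ws Hp HN Hshifts; split.
  - intros [x Hx]; apply (dense_d_hypercyclic_manifold p N fs ws x ltac:(lra) ltac:(lia) Hshifts
      (abs_field_onto K HK) Hx (abs_field_comm K HK) (abs_field_inv K HK)).
  - apply d_hypercyclic_of_dense_manifold; lra.
Qed.

Theorem corollary2p6 : @corollary_statement R_AbsRing /\ @corollary_statement C_AbsRing.
Proof. split; apply corollary_statement_of_abs_field; [exact abs_field_R | exact abs_field_C]. Qed.
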